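(* Let $\mathbb{S}=\mathbb{R}/2\pi\mathbb{Z}$, let $\mathcal{H}_0\in\mathbb{R}$ be a nonzero constant, and let $u_0\in H^1(\mathbb{S})$ satisfy $\mathcal{F}(u_0)=0$ and $\mathcal{H}(u_0)=\mathcal{H}_0$, where $\mathcal{F}(v)=\int_{\mathbb{S}}\sin v(x)\,\mathrm{d}x$ and $\mathcal{H}(v)=\int_{\mathbb{S}}\cos v(x)\,\mathrm{d}x$. Let $u\in C^1([0,\infty);H^1(\mathbb{S}))$ be the unique global solution of $$u_t(t,x)=\big(\partial_x^{\dagger}\sin u(t)\big)(x)-\frac{1}{\mathcal{H}_0}\tilde{\mathcal{C}}(u(t)),\qquad u(0,x)=u_0(x),$$ where $\tilde{\mathcal{C}}(v)=\int_{\mathbb{S}}\cos v(x)\,\big(\partial_x^{\dagger}\sin v\big)(x)\,\mathrm{d}x$. Then $\mathcal{F}(u(t))=0$ and $\mathcal{H}(u(t))=\mathcal{H}_0$ for all $t\ge0$.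
   Context: $H^1(\mathbb{S})$ is the periodic Sobolev space. The operator $\partial_x^{\dagger}$ is defined via Fourier series by $\partial_x^{\dagger}v(x)=\sum_{k\in\mathbb{Z},\,k\neq0}\frac{\hat v(k)}{k\mathrm{i}}\exp(k\mathrm{i}x)$ with $\hat v(k)=\frac{1}{2\pi}\int_{\mathbb{S}}v(x)\exp(-k\mathrm{i}x)\,\mathrm{d}x$. (Existence and uniqueness of this global solution for any $u_0\in H^1(\mathbb{S})$ and nonzero $\mathcal{H}_0$ is known.) *)

From Stdlib Require Import Reals ZArith.
From Coquelicot Require Import Coquelicot.
Open Scope R_scope.

Definition cexp (theta : R) : C := (cos theta, sin theta).

(* Functions on S = R/2piZ are represented as 2pi-periodic functions R -> R. *)
Definition periodic (v : R -> R) : Prop := forall x, v (x + 2 * PI) = v x.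

Definition fourier (v : R -> R) (k : Z) : C :=
  Cmult (RtoC (/ (2 * PI)))
  (RInt (V := C_R_CompleteNormedModule)
       (fun x => Cmult (RtoC (v x)) (cexp (- IZR k * x))) 0 (2 * PI)).

(* H^1(S), via the Fourier characterization sum_k (1+k^2)|\hat v(k)|^2 < oo;
   elements are represented by their (unique) continuous representative. *)
Definition H1_tail (v : R -> R) (n : nat) : R :=
  let k := Z.of_nat (S n) in
  (1 + (IZR k) ^ 2) * (Cmod (fourier v k) ^ 2 + Cmod (fourier v (- k)) ^ 2).

Definition inH1 (v : R -> R) : Prop :=
  periodic v /\ (forall x, continuous v x) /\ ex_series (H1_tail v).

Definition H1norm (v : R -> R) : R :=
  sqrt (Cmod (fourier v 0%Z) ^ 2 + Series (H1_tail v)).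

(* partial_x^dagger v (x) = sum_{k<>0} \hat v(k)/(k i) exp(k i x)
   (real part; summed symmetrically over +-k, the series being absolutely
   convergent) *)
Definition dagger (v : R -> R) (x : R) : R :=
  Series (fun n =>
    let k := Z.of_nat (S n) in
    Re (Cplus (Cdiv (Cmult (fourier v k) (cexp (IZR k * x))) (0, IZR k))
              (Cdiv (Cmult (fourier v (- k)) (cexp (- IZR k * x))) (0, - IZR k)))).

Definition calF (v : R -> R) : R := RInt (fun x => sin (v x)) 0 (2 * PI).
Definition calH (v : R -> R) : R := RInt (fun x => cos (v x)) 0 (2 * PI).
Definition calCt (v : R -> R) : R :=
  RInt (fun x => cos (v x) * dagger (fun y => sin (v y)) x) 0 (2 * PI).

(* u in C^1([0,oo); H^1(S)) with time derivative u' (taken in H^1 norm) *)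
Definition C1_H1 (u u' : R -> R -> R) : Prop :=
  (forall t, 0 <= t -> inH1 (u t) /\ inH1 (u' t)) /\
  (forall t, 0 <= t ->
     filterlim (fun h => H1norm (fun x => (u (t + h) x - u t x) / h - u' t x))
       (within (fun h => h <> 0 /\ 0 <= t + h) (locally 0)) (locally 0)) /\
  (forall t, 0 <= t ->
     filterlim (fun s => H1norm (fun x => u' s x - u' t x))
       (within (fun s => 0 <= s) (locally t)) (locally 0)).

(* Write F(t) = calF (u t), H(t) = calH (u t) and C(t) = calCt (u t). The
   operator dagger is skew-adjoint, so the integral of sin u * dagger (sin u)
   vanishes, and differentiating under the integral along the flow gives
   F' = C (1 - H / H0) and H' = C F / H0. Hence F^2 + (H - H0)^2 has zero
   derivative on [0, +oo), and it vanishes at t = 0.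
   Both analytic inputs come from Fejér summation (the Fejér kernel is a
   positive approximate identity): the H^1 norm bounds the sup norm, so the
   H^1 time derivative of u gives the time derivative of the integral of F(u);
   and Bessel's inequality makes the series defining dagger g converge
   uniformly, so the integral of g * dagger g can be computed termwise. *)

From Stdlib Require Import Reals ZArith Lra Lia FunctionalExtensionality.
From Coquelicot Require Import Coquelicot.
Open Scope R_scope.

Definition cont (f : R -> R) : Prop := forall x, continuous f x.

Lemma ex_RInt_cont f a b : cont f -> ex_RInt f a b.
Proof. intros Hf; apply (@ex_RInt_continuous R_CompleteNormedModule); intros; apply Hf. Qed.

Lemma cont_const c : cont (fun _ => c).
Proof. intros x; apply continuous_const. Qed.

Lemma cont_id : cont (fun x => x).
Proof. intros x; apply continuous_id. Qed.

Lemma cont_plus f g : cont f -> cont g -> cont (fun x => f x + g x).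
Proof. intros Hf Hg x; apply (continuous_plus f g); auto. Qed.

Lemma cont_opp f : cont f -> cont (fun x => - f x).
Proof. intros Hf x; apply (continuous_opp f); auto. Qed.

Lemma cont_minus f g : cont f -> cont g -> cont (fun x => f x - g x).
Proof. intros Hf Hg; apply cont_plus; [|apply cont_opp]; auto. Qed.

Lemma cont_mult f g : cont f -> cont g -> cont (fun x => f x * g x).
Proof. intros Hf Hg x; apply (continuous_mult f g); auto. Qed.

Lemma cont_comp f g : cont f -> cont g -> cont (fun x => g (f x)).
Proof. intros Hf Hg x; apply (continuous_comp f g); auto. Qed.

Lemma cont_sin : cont sin.
Proof. exact continuous_sin. Qed.

Lemma cont_cos : cont cos.
Proof. exact continuous_cos. Qed.

Lemma cont_sum (F : nat -> R -> R) N :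
  (forall k, cont (F k)) -> cont (fun x => sum_f_R0 (fun k => F k x) N).
Proof. intros HF; induction N; simpl; [|apply cont_plus]; auto. Qed.

Lemma cont_ext f g : (forall x, f x = g x) -> cont f -> cont g.
Proof. intros E Hf x; apply (continuous_ext f g); auto. Qed.

Create HintDb cont.
#[export] Hint Resolve cont_sin cont_cos : cont.

Ltac solve_cont :=
  try unfold Rdiv;
  first
  [ assumption
  | solve [auto with cont]
  | lazymatch goal with
    | |- forall _, _ => intro; solve_cont
    | |- cont (fun _ => ?c) => apply cont_const
    | |- cont (fun y => y) => apply cont_id
    | |- cont (fun y => sum_f_R0 (fun k => @?F k y) ?N) =>
        apply (cont_sum F N); intros; solve_cont
    | |- cont (fun y => Rplus (@?f y) (@?g y)) => apply (cont_plus f g); solve_cont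
    | |- cont (fun y => Rminus (@?f y) (@?g y)) => apply (cont_minus f g); solve_cont
    | |- cont (fun y => Rmult (@?f y) (@?g y)) => apply (cont_mult f g); solve_cont
    | |- cont (fun y => Ropp (@?f y)) => apply (cont_opp f); solve_cont
    | |- cont (fun y => ?h (@?f y)) => apply (cont_comp f h); solve_cont
    end ].

Lemma RInt_plus_cont f g a b : cont f -> cont g ->
  RInt (fun x => f x + g x) a b = RInt f a b + RInt g a b.
Proof. intros Hf Hg; apply (RInt_plus f g); apply ex_RInt_cont; auto. Qed.

Lemma RInt_minus_cont f g a b : cont f -> cont g ->
  RInt (fun x => f x - g x) a b = RInt f a b - RInt g a b.
Proof. intros Hf Hg; apply (RInt_minus f g); apply ex_RInt_cont; auto. Qed.

Lemma RInt_scal_cont c f a b : cont f ->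
  RInt (fun x => c * f x) a b = c * RInt f a b.
Proof. intros Hf; apply (RInt_scal f); apply ex_RInt_cont; auto. Qed.

Lemma RInt_const_R (c a b : R) : RInt (fun _ => c) a b = (b - a) * c.
Proof. rewrite RInt_const; reflexivity. Qed.

Lemma RInt_ext_R (f g : R -> R) a b :
  (forall x, f x = g x) -> RInt f a b = RInt g a b.
Proof. intros E; apply RInt_ext; intros; apply E. Qed.

Lemma RInt_sum_cont (F : nat -> R -> R) N a b : (forall k, cont (F k)) ->
  RInt (fun x => sum_f_R0 (fun k => F k x) N) a b
  = sum_f_R0 (fun k => RInt (F k) a b) N.
Proof.
  intros HF; induction N; simpl; [reflexivity|].
  rewrite RInt_plus_cont, IHN; auto. apply cont_sum; auto.
Qed.

Lemma RInt_Chasles_cont f a b c : cont f -> RInt f a b + RInt f b c = RInt f a c.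
Proof. intros Hf; apply (RInt_Chasles f); apply ex_RInt_cont; auto. Qed.

Lemma RInt_swap_cont f a b : cont f -> RInt f a b = - RInt f b a :> R.
Proof.
  intros Hf; rewrite <- (opp_RInt_swap f b a); [reflexivity|apply ex_RInt_cont; auto].
Qed.

Lemma RInt_le_cont f g a b : a <= b -> cont f -> cont g ->
  (forall x, a <= x <= b -> f x <= g x) -> RInt f a b <= RInt g a b.
Proof.
  intros Hab Hf Hg H; apply RInt_le; auto; try (apply ex_RInt_cont; auto).
  intros; apply H; lra.
Qed.

Lemma abs_RInt_le_cont f g a b : a <= b -> cont f -> cont g ->
  (forall x, a <= x <= b -> Rabs (f x) <= g x) -> Rabs (RInt f a b) <= RInt g a b.
Proof.
  intros Hab Hf Hg H.
  eapply Rle_trans; [apply abs_RInt_le; auto; apply ex_RInt_cont; auto|].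
  apply RInt_le; auto.
  - apply (ex_RInt_norm f), ex_RInt_cont; auto.
  - apply ex_RInt_cont; auto.
  - intros; apply H; lra.
Qed.

Lemma RInt_periodic_shift f a : cont f -> periodic f ->
  RInt f a (a + 2 * PI) = RInt f 0 (2 * PI).
Proof.
  intros Hf Hp.
  assert (Hshift : RInt f (2 * PI) (a + 2 * PI) = RInt f 0 a).
  { assert (H := RInt_comp_lin f 1 (2 * PI) 0 a (ex_RInt_cont f _ _ Hf)).
    replace (1 * 0 + 2 * PI) with (2 * PI) in H by ring.
    replace (1 * a + 2 * PI) with (a + 2 * PI) in H by ring.
    rewrite <- H. apply RInt_ext; intros x _.
    unfold scal; simpl; unfold mult; simpl. rewrite !Rmult_1_l. apply Hp. }
  rewrite <- (RInt_Chasles_cont f a 0), <- (RInt_Chasles_cont f 0 (2 * PI)), Hshift,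
    (RInt_swap_cont f a 0); auto.
  lra.
Qed.

Lemma RInt_reflect h x a b : cont h ->
  RInt (fun y => h (x - y)) a b = RInt h (x - b) (x - a).
Proof.
  intros Hh.
  assert (H := RInt_comp_lin h (-1) x a b (ex_RInt_cont h _ _ Hh)).
  replace (-1 * a + x) with (x - a) in H by ring.
  replace (-1 * b + x) with (x - b) in H by ring.
  rewrite (RInt_swap_cont h (x - b)), <- H by auto.
  change (@eq R (RInt (fun y => h (x - y)) a b)
    (- RInt (fun y => -1 * h (-1 * y + x)) a b)).
  rewrite RInt_scal_cont by solve_cont.
  replace (fun y => h (-1 * y + x)) with (fun y => h (x - y))
    by (apply functional_extensionality; intros y; f_equal; ring).
  lra.
Qed.

Lemma sum_f_R0_scal_l c (a : nat -> R) N :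
  sum_f_R0 (fun i => c * a i) N = c * sum_f_R0 a N.
Proof. rewrite scal_sum; apply sum_eq; intros; ring. Qed.

Lemma sum_f_R0_le_mono (a : nat -> R) m n : (forall k, 0 <= a k) -> (m <= n)%nat ->
  sum_f_R0 a m <= sum_f_R0 a n.
Proof.
  intros Ha Hmn; induction Hmn as [|n _ IH]; [lra|].
  rewrite tech5; specialize (Ha (S n)); lra.
Qed.

Lemma sum_f_R0_ge_mul_mid (E : nat -> R) M : (forall n, 0 <= E n) ->
  (forall n, E n <= E (S n)) -> INR (S M) * E M <= sum_f_R0 E (M + M).
Proof.
  intros H0 H1.
  assert (Hmono : forall k, E M <= E (M + k)%nat).
  { induction k as [|k IH]; [rewrite Nat.add_0_r; lra|].
    rewrite Nat.add_succ_r; specialize (H1 (M + k)%nat); lra. }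
  assert (Hj : forall j, INR (S j) * E M <= sum_f_R0 (fun k => E (M + k)%nat) j).
  { induction j as [|j IH]; simpl sum_f_R0.
    - rewrite Nat.add_0_r; simpl; lra.
    - rewrite S_INR; specialize (Hmono (S j)); lra. }
  eapply Rle_trans; [apply Hj|].
  destruct M as [|M]; [simpl; lra|].
  rewrite (tech2 E M (S M + S M)) by lia.
  replace (S M + S M - S M)%nat with (S M) by lia.
  assert (0 <= sum_f_R0 E M) by (apply cond_pos_sum; auto).
  lra.
Qed.

Lemma Series_ge0 (a : nat -> R) : (forall n, 0 <= a n) -> ex_series a -> 0 <= Series a.
Proof.
  intros Ha Hs.
  replace 0 with (Series (fun n => 0 * a n)) by (rewrite Series_scal_l; ring).
  apply Series_le; auto; intros n; specialize (Ha n); split; lra.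
Qed.

Lemma sum_f_R0_le_Series (a : nat -> R) N : (forall n, 0 <= a n) -> ex_series a ->
  sum_f_R0 a N <= Series a.
Proof.
  intros Ha Hs.
  rewrite (Series_incr_n a (S N)) by (auto; lia); simpl pred.
  assert (0 <= Series (fun k => a (S N + k)%nat)); [|lra].
  apply Series_ge0; [auto|apply (ex_series_incr_n a (S N)), Hs].
Qed.

Lemma ex_series_of_bounded (a : nat -> R) M : (forall n, 0 <= a n) ->
  (forall N, sum_f_R0 a N <= M) -> ex_series a.
Proof.
  intros Ha HM.
  destruct (ex_finite_lim_seq_incr (sum_n a) M) as [l Hl].
  - intros n; rewrite !sum_n_Reals, tech5; specialize (Ha (S n)); lra.
  - intros n; rewrite sum_n_Reals; auto.
  - exists l; exact Hl.
Qed.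

Lemma Series_minus_sum_small (a : nat -> R) : ex_series a ->
  forall eps, 0 < eps -> exists N, Rabs (Series a - sum_f_R0 a N) < eps.
Proof.
  intros Hs eps Heps.
  assert (Hlim : is_lim_seq (sum_n a) (Series a)) by exact (Series_correct a Hs).
  destruct (proj2 (is_lim_seq_spec _ _) Hlim (mkposreal eps Heps)) as [N HN].
  exists N; rewrite <- sum_n_Reals, Rabs_minus_sym; apply HN; lia.
Qed.

Lemma eq_0_of_abs_le_Series_tail x c (m : nat -> R) : ex_series m -> 0 <= c ->
  (forall N, Rabs x <= c * (Series m - sum_f_R0 m N)) -> x = 0.
Proof.
  intros Hm Hc Hx; apply Rabs_eq_0, Rle_antisym; [|apply Rabs_pos].
  apply le_epsilon; intros eps Heps.
  destruct (Series_minus_sum_small m Hm (eps / (c + 1))) as [N HN];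
    [apply Rdiv_lt_0_compat; lra|].
  eapply Rle_trans; [apply (Hx N)|].
  apply Rle_trans with (c * (eps / (c + 1))).
  - apply Rmult_le_compat_l; [lra|].
    apply Rlt_le, Rle_lt_trans with (2 := HN), Rle_abs.
  - apply Rle_trans with ((c + 1) * (eps / (c + 1))).
    + apply Rmult_le_compat_r; [apply Rlt_le, Rdiv_lt_0_compat|]; lra.
    + right; field; lra.
Qed.

Lemma ex_series_abs_le (a b : nat -> R) :
  (forall n, Rabs (a n) <= b n) -> ex_series b -> ex_series a.
Proof. intros Hab Hb; apply (ex_series_le a b); [exact Hab|exact Hb]. Qed.

Lemma abs_Series_minus_sum_le (a m : nat -> R) N :
  (forall n, Rabs (a n) <= m n) -> ex_series m ->
  Rabs (Series a - sum_f_R0 a N) <= Series m - sum_f_R0 m N.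
Proof.
  intros Ham Hm.
  assert (Ha : ex_series a) by (apply (ex_series_abs_le a m); auto).
  rewrite (Series_incr_n a (S N)), (Series_incr_n m (S N)) by (auto; lia); simpl pred.
  rewrite !Rplus_minus_l.
  assert (Hmt : ex_series (fun k => m (S N + k)%nat)) by (apply (ex_series_incr_n m (S N)), Hm).
  eapply Rle_trans; [apply Series_Rabs|].
  - apply (ex_series_abs_le _ (fun k => m (S N + k)%nat)); auto.
    intros n; rewrite Rabs_Rabsolu; auto.
  - apply Series_le; auto; intros n; split; [apply Rabs_pos|auto].
Qed.

Lemma INR_S_pos n : 0 < INR (S n).
Proof. apply lt_0_INR; lia. Qed.

Lemma periodic_cos_nat k : periodic (fun s => cos (INR k * s)).
Proof.
  intros s; replace (INR k * (s + 2 * PI)) with (INR k * s + 2 * INR k * PI) by ring.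
  apply cos_period.
Qed.

Lemma periodic_sin_nat k : periodic (fun s => sin (INR k * s)).
Proof.
  intros s; replace (INR k * (s + 2 * PI)) with (INR k * s + 2 * INR k * PI) by ring.
  apply sin_period.
Qed.

Lemma RInt_cos_nat k : (0 < k)%nat -> RInt (fun s => cos (INR k * s)) 0 (2 * PI) = 0.
Proof.
  intros Hk. assert (Hk' : 0 < INR k) by (apply lt_0_INR; auto).
  set (F := fun s => sin (INR k * s) / INR k).
  rewrite (is_RInt_unique _ _ _ (minus (F (2 * PI)) (F 0))).
  - unfold F, minus, plus, opp; simpl.
    rewrite <- (Rplus_0_l (2 * PI)), (periodic_sin_nat k 0), Rmult_0_r, sin_0.
    field. lra.
  - assert (Hc : cont (fun s => cos (INR k * s))) by solve_cont.
    apply (is_RInt_derive F); [|intros x _; apply Hc].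
    intros x _. unfold F. auto_derive; [auto|field; lra].
Qed.

Definition cos_coef (v : R -> R) (k : nat) : R :=
  RInt (fun x => v x * cos (INR k * x)) 0 (2 * PI).

Definition sin_coef (v : R -> R) (k : nat) : R :=
  RInt (fun x => v x * sin (INR k * x)) 0 (2 * PI).

Lemma cos_coef_0 v : cos_coef v 0 = RInt v 0 (2 * PI).
Proof. apply RInt_ext_R; intros x; simpl; rewrite Rmult_0_l, cos_0; ring. Qed.

Lemma sin_coef_0 v : sin_coef v 0 = 0.
Proof.
  unfold sin_coef; rewrite (RInt_ext_R _ (fun _ => 0)), RInt_const_R.
  - apply Rmult_0_r.
  - intros x; simpl; rewrite Rmult_0_l, sin_0; ring.
Qed.

Lemma cos_coef_plus f g k : cont f -> cont g ->
  cos_coef (fun x => f x + g x) k = cos_coef f k + cos_coef g k.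
Proof.
  intros Hf Hg; unfold cos_coef; rewrite <- RInt_plus_cont by solve_cont.
  apply RInt_ext_R; intros; ring.
Qed.

Lemma sin_coef_plus f g k : cont f -> cont g ->
  sin_coef (fun x => f x + g x) k = sin_coef f k + sin_coef g k.
Proof.
  intros Hf Hg; unfold sin_coef; rewrite <- RInt_plus_cont by solve_cont.
  apply RInt_ext_R; intros; ring.
Qed.

Lemma cos_coef_scal c f k : cont f -> cos_coef (fun x => c * f x) k = c * cos_coef f k.
Proof.
  intros Hf; unfold cos_coef; rewrite <- RInt_scal_cont by solve_cont.
  apply RInt_ext_R; intros; ring.
Qed.

Lemma sin_coef_scal c f k : cont f -> sin_coef (fun x => c * f x) k = c * sin_coef f k.
Proof.
  intros Hf; unfold sin_coef; rewrite <- RInt_scal_cont by solve_cont.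
  apply RInt_ext_R; intros; ring.
Qed.

Lemma fourier_real v c : cont v ->
  Cmult (RtoC (/ (2 * PI)))
    (RInt (V := C_R_CompleteNormedModule)
       (fun x => Cmult (RtoC (v x)) (cexp (c * x))) 0 (2 * PI)) =
  (/ (2 * PI) * RInt (fun x => v x * cos (c * x)) 0 (2 * PI),
   / (2 * PI) * RInt (fun x => v x * sin (c * x)) 0 (2 * PI)).
Proof.
  intros Hv.
  rewrite (is_RInt_unique (V := C_R_CompleteNormedModule) _ _ _
             (RInt (fun x => v x * cos (c * x)) 0 (2 * PI),
              RInt (fun x => v x * sin (c * x)) 0 (2 * PI))).
  - unfold Cmult, RtoC; simpl. f_equal; ring.
  - apply (is_RInt_fct_extend_pair (U := R_NormedModule) (V := R_NormedModule)); simpl.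
    + apply (is_RInt_ext (fun x => v x * cos (c * x))).
      * intros x _; simpl; ring.
      * apply (RInt_correct (V := R_CompleteNormedModule)), ex_RInt_cont; solve_cont.
    + apply (is_RInt_ext (fun x => v x * sin (c * x))).
      * intros x _; simpl; ring.
      * apply (RInt_correct (V := R_CompleteNormedModule)), ex_RInt_cont; solve_cont.
Qed.

Lemma fourier_nat v k : cont v ->
  fourier v (Z.of_nat k) = (/ (2 * PI) * cos_coef v k, - (/ (2 * PI) * sin_coef v k)).
Proof.
  intros Hv; unfold fourier; rewrite <- INR_IZR_INZ, fourier_real by auto.
  unfold cos_coef, sin_coef; f_equal.
  - f_equal; apply RInt_ext_R; intros x; rewrite Ropp_mult_distr_l_reverse, cos_neg; ring.
  - rewrite (RInt_ext_R _ (fun x => -1 * (v x * sin (INR k * x)))).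
    + rewrite RInt_scal_cont by solve_cont; ring.
    + intros x; rewrite Ropp_mult_distr_l_reverse, sin_neg; ring.
Qed.

Lemma fourier_opp_nat v k : cont v ->
  fourier v (- Z.of_nat k) = (/ (2 * PI) * cos_coef v k, / (2 * PI) * sin_coef v k).
Proof.
  intros Hv; unfold fourier.
  rewrite opp_IZR, <- INR_IZR_INZ, Ropp_involutive, fourier_real by auto; reflexivity.
Qed.

Lemma Cmod_pair_sqr a b : Cmod (a, b) ^ 2 = a ^ 2 + b ^ 2.
Proof. unfold Cmod; simpl fst; simpl snd. rewrite pow2_sqrt; [ring|nra]. Qed.

Lemma H1_tail_coef v n : cont v ->
  H1_tail v n = (1 + INR (S n) ^ 2) / (2 * PI ^ 2)
                * (cos_coef v (S n) ^ 2 + sin_coef v (S n) ^ 2).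
Proof.
  intros Hv; unfold H1_tail; cbv zeta.
  rewrite fourier_nat, fourier_opp_nat, !Cmod_pair_sqr, <- INR_IZR_INZ by auto.
  field. apply PI_neq0.
Qed.

Lemma H1_tail_ge0 v n : cont v -> 0 <= H1_tail v n.
Proof.
  intros Hv; rewrite H1_tail_coef by auto.
  apply Rmult_le_pos; [|nra].
  apply Rdiv_le_0_compat; [nra|]. pose proof PI_RGT_0; nra.
Qed.

Lemma H1norm_coef v : cont v ->
  H1norm v = sqrt ((cos_coef v 0 / (2 * PI)) ^ 2 + Series (H1_tail v)).
Proof.
  intros Hv; unfold H1norm; change 0%Z with (Z.of_nat 0).
  rewrite fourier_nat, Cmod_pair_sqr, sin_coef_0 by auto.
  f_equal; unfold Rdiv; ring.
Qed.

Definition dagger_term (v : R -> R) (n : nat) (x : R) : R :=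
  (cos_coef v (S n) * sin (INR (S n) * x) - sin_coef v (S n) * cos (INR (S n) * x))
  / (PI * INR (S n)).

Lemma dagger_coef v x : cont v -> dagger v x = Series (fun n => dagger_term v n x).
Proof.
  intros Hv; unfold dagger; apply Series_ext; intros n; cbv zeta.
  rewrite fourier_nat, fourier_opp_nat, <- INR_IZR_INZ by auto.
  pose proof (INR_S_pos n); pose proof PI_RGT_0.
  unfold dagger_term; set (k := INR (S n)) in *.
  unfold cexp, Cdiv, Cmult, Cinv, Cplus, Re; simpl.
  replace (- k * x) with (- (k * x)) by ring; rewrite cos_neg, sin_neg.
  field; lra.
Qed.

(** * Fejér summation *)

Definition dirichlet (n : nat) (s : R) : R :=
  2 * sum_f_R0 (fun k => cos (INR k * s)) n - 1.

Definition fejer (N : nat) (s : R) : R :=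
  / INR (S N) * sum_f_R0 (fun n => dirichlet n s) N.

Lemma cont_dirichlet n : cont (dirichlet n).
Proof. unfold dirichlet; solve_cont. Qed.

Lemma cont_fejer N : cont (fejer N).
Proof.
  unfold fejer; apply (cont_mult (fun _ => _)); [solve_cont|].
  apply (cont_sum (fun n s => dirichlet n s)); intros; apply cont_dirichlet.
Qed.

#[export] Hint Resolve cont_dirichlet cont_fejer : cont.

Lemma periodic_fejer N : periodic (fejer N).
Proof.
  intros s; unfold fejer, dirichlet; f_equal; apply sum_eq; intros n _.
  f_equal; f_equal; apply sum_eq; intros k _; apply periodic_cos_nat.
Qed.

(* Telescoping through [2 cos(ks) (1 - cos s) = 2 cos(ks) - cos((k+1)s) - cos((k-1)s)]. *)
Lemma dirichlet_mul_1_cos n s :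
  dirichlet n s * (1 - cos s) = cos (INR n * s) - cos (INR (S n) * s).
Proof.
  induction n as [|n IH].
  - unfold dirichlet; simpl; rewrite Rmult_0_l, Rmult_1_l, cos_0; ring.
  - replace (dirichlet (S n) s) with (dirichlet n s + 2 * cos (INR (S n) * s))
      by (unfold dirichlet; rewrite tech5; ring).
    rewrite Rmult_plus_distr_r, IH.
    replace (INR (S (S n)) * s) with (INR (S n) * s + s) by (rewrite (S_INR (S n)); ring).
    replace (INR n * s) with (INR (S n) * s - s) by (rewrite (S_INR n); ring).
    rewrite cos_plus, cos_minus; ring.
Qed.

Lemma fejer_mul_1_cos N s :
  fejer N s * (1 - cos s) = / INR (S N) * (1 - cos (INR (S N) * s)).
Proof.
  unfold fejer; rewrite Rmult_assoc; f_equal.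
  induction N as [|N IH]; simpl sum_f_R0.
  - rewrite dirichlet_mul_1_cos; simpl; rewrite Rmult_0_l, cos_0; ring.
  - rewrite Rmult_plus_distr_r, IH, dirichlet_mul_1_cos; ring.
Qed.

Lemma fejer_ge0 N s : 0 <= fejer N s.
Proof.
  pose proof (INR_S_pos N).
  destruct (Req_dec (cos s) 1) as [Hs|Hs].
  - assert (Hk : forall k, cos (INR k * s) = 1).
    { assert (Hsin : sin s = 0).
      { pose proof (sin2_cos2 s) as E; rewrite Hs in E; unfold Rsqr in E; nra. }
      induction k as [|k IH]; [simpl; rewrite Rmult_0_l; apply cos_0|].
      rewrite S_INR, Rmult_plus_distr_r, Rmult_1_l, cos_plus, IH, Hs, Hsin; ring. }
    unfold fejer; apply Rmult_le_pos; [left; apply Rinv_0_lt_compat; lra|].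
    apply cond_pos_sum; intros n; unfold dirichlet.
    rewrite (sum_eq _ (fun _ => 1)), sum_cte by (intros; apply Hk).
    rewrite S_INR; pose proof (pos_INR n); lra.
  - assert (Hc : cos s < 1) by (pose proof (COS_bound s); lra).
    assert (0 <= fejer N s * (1 - cos s)).
    { rewrite fejer_mul_1_cos; apply Rmult_le_pos; [left; apply Rinv_0_lt_compat; lra|].
      pose proof (COS_bound (INR (S N) * s)); lra. }
    nra.
Qed.

Lemma fejer_le_away N s d : 0 < d -> d <= Rabs s <= PI ->
  fejer N s <= 2 / (1 - cos d) / INR (S N).
Proof.
  intros Hd [H1 H2]. pose proof (INR_S_pos N); pose proof (fejer_ge0 N s).
  assert (Hc : cos s <= cos d).
  { replace (cos s) with (cos (Rabs s))
      by (unfold Rabs; destruct (Rcase_abs s); [apply cos_neg|reflexivity]).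
    apply cos_decr_1; pose proof (Rabs_pos s); lra. }
  assert (Hd1 : cos d < 1).
  { rewrite <- cos_0; apply cos_decreasing_1; lra. }
  assert (fejer N s * (1 - cos d) <= 2 / INR (S N)).
  { apply Rle_trans with (fejer N s * (1 - cos s)); [nra|].
    rewrite fejer_mul_1_cos; unfold Rdiv; rewrite Rmult_comm.
    apply Rmult_le_compat_r; [left; apply Rinv_0_lt_compat; lra|].
    pose proof (COS_bound (INR (S N) * s)); lra. }
  apply (Rmult_le_reg_r (1 - cos d)); [lra|].
  replace (2 / (1 - cos d) / INR (S N) * (1 - cos d)) with (2 / INR (S N))
    by (field; lra).
  lra.
Qed.

Lemma RInt_dirichlet n : RInt (dirichlet n) 0 (2 * PI) = 2 * PI.
Proof.
  assert (Hcos : forall k, cont (fun s => cos (INR k * s))) by (intros; solve_cont).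
  unfold dirichlet.
  rewrite RInt_minus_cont, RInt_scal_cont, (RInt_sum_cont (fun k s => cos (INR k * s)))
    by solve_cont.
  replace (sum_f_R0 _ n) with (2 * PI).
  - rewrite RInt_const_R; lra.
  - induction n as [|n IH].
    + simpl; rewrite (RInt_ext_R _ (fun _ => 1)), RInt_const_R; [lra|].
      intros x; rewrite Rmult_0_l; apply cos_0.
    + rewrite tech5, RInt_cos_nat, Rplus_0_r by lia; exact IH.
Qed.

Lemma RInt_fejer N : RInt (fejer N) (- PI) PI = 2 * PI :> R.
Proof.
  replace PI with (- PI + 2 * PI) at 2 by ring.
  rewrite RInt_periodic_shift by (auto with cont; apply periodic_fejer).
  unfold fejer.
  rewrite RInt_scal_cont, (RInt_sum_cont (fun n s => dirichlet n s)) by solve_cont.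
  rewrite (sum_eq _ (fun _ => 2 * PI)), sum_cte by (intros; apply RInt_dirichlet).
  pose proof (INR_S_pos N); field; lra.
Qed.

Definition fourier_sum (g : R -> R) (n : nat) (x : R) : R :=
  / PI * sum_f_R0 (fun k => cos_coef g k * cos (INR k * x) + sin_coef g k * sin (INR k * x)) n
  - / (2 * PI) * cos_coef g 0.

Definition cesaro_sum (g : R -> R) (N : nat) (x : R) : R :=
  / INR (S N) * sum_f_R0 (fun n => fourier_sum g n x) N.

Lemma cont_fourier_sum g n : cont (fourier_sum g n).
Proof. unfold fourier_sum; solve_cont. Qed.

#[export] Hint Resolve cont_fourier_sum : cont.

Lemma fourier_sum_conv g n x : cont g ->
  fourier_sum g n x = / (2 * PI) * RInt (fun y => g y * dirichlet n (x - y)) 0 (2 * PI).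
Proof.
  intros Hg.
  assert (Hk : forall k, RInt (fun y => g y * cos (INR k * (x - y))) 0 (2 * PI)
                         = cos (INR k * x) * cos_coef g k + sin (INR k * x) * sin_coef g k).
  { intros k; unfold cos_coef, sin_coef.
    rewrite <- !RInt_scal_cont, <- RInt_plus_cont by solve_cont.
    apply RInt_ext_R; intros y.
    replace (INR k * (x - y)) with (INR k * x - INR k * y) by ring.
    rewrite cos_minus; ring. }
  rewrite (RInt_ext_R _ (fun y => 2 * sum_f_R0 (fun k => g y * cos (INR k * (x - y))) n - g y)).
  - rewrite RInt_minus_cont, RInt_scal_cont,
      (RInt_sum_cont (fun k y => g y * cos (INR k * (x - y)))) by solve_cont.
    rewrite (sum_eq _ _ _ (fun k _ => Hk k)), <- cos_coef_0.
    unfold fourier_sum.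
    rewrite (sum_eq (fun k => cos_coef g k * cos (INR k * x) + sin_coef g k * sin (INR k * x))
               (fun k => cos (INR k * x) * cos_coef g k + sin (INR k * x) * sin_coef g k))
      by (intros; ring).
    field; apply PI_neq0.
  - intros y; unfold dirichlet; rewrite sum_f_R0_scal_l; ring.
Qed.

Lemma cesaro_sum_conv g N x : cont g -> periodic g ->
  cesaro_sum g N x = / (2 * PI) * RInt (fun s => g (x - s) * fejer N s) (- PI) PI.
Proof.
  intros Hg Hp.
  set (h := fun s => g (x - s) * fejer N s).
  assert (Hh : cont h) by (unfold h; solve_cont).
  assert (Hph : periodic h).
  { intros s; unfold h; rewrite periodic_fejer; f_equal.
    rewrite <- (Hp (x - (s + 2 * PI))); f_equal; ring. }
  assert (Hsym : RInt h (- PI) PI = RInt h 0 (2 * PI)).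
  { rewrite <- (RInt_periodic_shift h (- PI)) by auto; f_equal; ring. }
  assert (Hconv : RInt (fun y => g y * fejer N (x - y)) 0 (2 * PI) = RInt h 0 (2 * PI)).
  { rewrite (RInt_ext_R _ (fun y => h (x - y))).
    - rewrite RInt_reflect, Rminus_0_r, <- (RInt_periodic_shift h (x - 2 * PI)) by auto.
      f_equal; ring.
    - intros y; unfold h; f_equal; f_equal; ring. }
  fold h; rewrite Hsym, <- Hconv.
  unfold cesaro_sum, fejer.
  rewrite (sum_eq _ _ _ (fun n _ => fourier_sum_conv g n x Hg)), sum_f_R0_scal_l.
  rewrite (RInt_ext_R _ (fun y => / INR (S N) * sum_f_R0 (fun n => g y * dirichlet n (x - y)) N)).
  - rewrite RInt_scal_cont, (RInt_sum_cont (fun n y => g y * dirichlet n (x - y))) by solve_cont.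
    ring.
  - intros y; rewrite sum_f_R0_scal_l; ring.
Qed.

Lemma abs_cesaro_sum_le g N x B : cont g -> periodic g -> (forall y, Rabs (g y) <= B) ->
  Rabs (cesaro_sum g N x) <= B.
Proof.
  intros Hg Hp HB; pose proof PI_RGT_0.
  rewrite cesaro_sum_conv, Rabs_mult, Rabs_right by (auto; left; apply Rinv_0_lt_compat; lra).
  apply Rle_trans with (/ (2 * PI) * RInt (fun s => B * fejer N s) (- PI) PI).
  - apply Rmult_le_compat_l; [left; apply Rinv_0_lt_compat; lra|].
    apply abs_RInt_le_cont; [lra|solve_cont|solve_cont|].
    intros s _; rewrite Rabs_mult, (Rabs_right (fejer N s)) by (apply Rle_ge, fejer_ge0).
    apply Rmult_le_compat_r; [apply fejer_ge0|apply HB].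
  - rewrite RInt_scal_cont, RInt_fejer by solve_cont; right; field; lra.
Qed.

Lemma approx_identity (phi : R -> R) (K : nat -> R -> R) :
  cont phi -> phi 0 = 0 ->
  (forall N, cont (K N)) -> (forall N s, 0 <= K N s) ->
  (forall N, RInt (K N) (- PI) PI = 2 * PI :> R) ->
  (forall d e, 0 < d -> 0 < e -> exists N, forall s, d <= Rabs s <= PI -> K N s <= e) ->
  forall eps, 0 < eps -> exists N, Rabs (RInt (fun s => phi s * K N s) (- PI) PI) < eps.
Proof.
  intros Hphi H0 HK Kpos Kint Kaway eps Heps; pose proof PI_RGT_0.
  destruct (continuity_ab_maj (fun s => Rabs (phi s)) (- PI) PI) as [m [Hm _]]; [lra| |].
  { intros c _; apply continuity_pt_filterlim, continuous_comp; [apply Hphi|].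
    apply continuous_Rabs. }
  set (M := Rabs (phi m)); assert (HM : 0 <= M) by apply Rabs_pos.
  set (e := eps / (4 * PI)); assert (He : 0 < e) by (unfold e; apply Rdiv_lt_0_compat; lra).
  destruct (proj1 (filterlim_locally phi (phi 0)) (Hphi 0) (mkposreal e He)) as [d Hd].
  set (e' := e / (M + 1)); assert (He' : 0 < e') by (unfold e'; apply Rdiv_lt_0_compat; lra).
  destruct (Kaway d e' (cond_pos d) He') as [N HN].
  exists N.
  apply Rle_lt_trans with (RInt (fun s => e * K N s + M * e') (- PI) PI).
  - apply abs_RInt_le_cont; [lra|solve_cont|solve_cont|].
    intros s Hs; rewrite Rabs_mult, (Rabs_right (K N s)) by (apply Rle_ge, Kpos).
    pose proof (Kpos N s); pose proof (Rabs_pos (phi s)).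
    destruct (Rlt_or_le (Rabs s) d) as [Hsd|Hsd].
    + assert (Rabs (phi s) < e).
      { assert (B := Hd s); change (Rabs (s - 0) < d -> Rabs (phi s - phi 0) < e) in B.
        rewrite H0, Rminus_0_r, Rminus_0_r in B; auto. }
      assert (Rabs (phi s) * K N s <= e * K N s) by (apply Rmult_le_compat_r; lra).
      pose proof (Rmult_le_pos M e' HM (Rlt_le _ _ He')); lra.
    + assert (Rabs (phi s) <= M) by (apply Hm; lra).
      assert (K N s <= e') by (apply HN; split; [|unfold Rabs; destruct (Rcase_abs s)]; lra).
      assert (Rabs (phi s) * K N s <= M * e') by (apply Rmult_le_compat; lra).
      pose proof (Rmult_le_pos e (K N s) (Rlt_le _ _ He) (Kpos N s)); lra.
  - rewrite RInt_plus_cont, RInt_scal_cont, Kint, RInt_const_R by solve_cont.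
    assert (M * e' < e) by (unfold e'; apply (Rmult_lt_reg_r (M + 1)); [lra|];
                              field_simplify; lra).
    assert (2 * PI * (M * e') < 2 * PI * e) by (apply Rmult_lt_compat_l; lra).
    assert (e * (2 * PI) = eps / 2) by (unfold e; field; lra).
    lra.
Qed.

Lemma fejer_small_away d e : 0 < d -> 0 < e ->
  exists N, forall s, d <= Rabs s <= PI -> fejer N s <= e.
Proof.
  intros Hd He.
  destruct (INR_archimed e (2 / (1 - cos d))) as [N HN]; [lra|].
  exists N; intros s Hs.
  eapply Rle_trans; [apply (fejer_le_away N s d Hd Hs)|].
  set (A := 2 / (1 - cos d)) in *; pose proof (INR_S_pos N).
  apply (Rmult_le_reg_r (INR (S N))); [lra|].
  replace (A / INR (S N) * INR (S N)) with A by (field; lra).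
  rewrite S_INR; lra.
Qed.

Lemma cesaro_sum_cvg g x : cont g -> periodic g ->
  forall eps, 0 < eps -> exists N, Rabs (cesaro_sum g N x - g x) < eps.
Proof.
  intros Hg Hp eps Heps; pose proof PI_RGT_0.
  destruct (approx_identity (fun s => g (x - s) - g x) fejer) with (eps := 2 * PI * eps)
    as [N HN];
    [solve_cont|rewrite Rminus_0_r; ring|exact cont_fejer|exact fejer_ge0|exact RInt_fejer
    |exact fejer_small_away|nra|].
  exists N.
  replace (cesaro_sum g N x - g x)
    with (/ (2 * PI) * RInt (fun s => (g (x - s) - g x) * fejer N s) (- PI) PI).
  - rewrite Rabs_mult, Rabs_right by (left; apply Rinv_0_lt_compat; lra).
    apply (Rmult_lt_reg_l (2 * PI)); [lra|].
    rewrite <- Rmult_assoc, Rinv_r, Rmult_1_l by lra; exact HN.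
  - rewrite cesaro_sum_conv by auto.
    rewrite (RInt_ext_R _ (fun s => g (x - s) * fejer N s - g x * fejer N s)) by (intros; ring).
    rewrite RInt_minus_cont, RInt_scal_cont, RInt_fejer by solve_cont.
    field; lra.
Qed.

(** * Bessel's inequality and the sup bound on H^1 *)

Definition coef_amp (g : R -> R) (k : nat) : R :=
  sqrt (cos_coef g k ^ 2 + sin_coef g k ^ 2) / PI.

Lemma coef_amp_ge0 g k : 0 <= coef_amp g k.
Proof.
  unfold coef_amp; apply Rdiv_le_0_compat; [apply sqrt_pos|apply PI_RGT_0].
Qed.

Lemma abs_lin_comb_cos_sin a b x : Rabs (a * cos x + b * sin x) <= sqrt (a ^ 2 + b ^ 2).
Proof.
  rewrite <- sqrt_Rsqr_abs; apply sqrt_le_1_alt.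
  pose proof (sin2_cos2 x); pose proof (pow2_ge_0 (a * sin x - b * cos x)).
  unfold Rsqr in *; nra.
Qed.

Lemma abs_fourier_sum_le g n x :
  Rabs (fourier_sum g n x) <= sum_f_R0 (coef_amp g) n + Rabs (cos_coef g 0) / (2 * PI).
Proof.
  pose proof PI_RGT_0; unfold fourier_sum.
  eapply Rle_trans; [apply Rabs_triang|]; rewrite Rabs_Ropp, !Rabs_mult.
  rewrite (Rabs_right (/ PI)), (Rabs_right (/ (2 * PI)))
    by (left; apply Rinv_0_lt_compat; lra).
  apply Rplus_le_compat; [|right; unfold Rdiv; ring].
  eapply Rle_trans.
  - apply Rmult_le_compat_l; [left; apply Rinv_0_lt_compat; lra|].
    eapply Rle_trans; [apply sum_f_R0_triangle|].
    apply sum_Rle; intros k _; apply abs_lin_comb_cos_sin.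
  - rewrite scal_sum; right; reflexivity.
Qed.

Lemma abs_cesaro_sum_le_of g N x B : (forall n, Rabs (fourier_sum g n x) <= B) ->
  Rabs (cesaro_sum g N x) <= B.
Proof.
  intros HB; unfold cesaro_sum; pose proof (INR_S_pos N).
  rewrite Rabs_mult, Rabs_right by (left; apply Rinv_0_lt_compat; lra).
  eapply Rle_trans.
  - apply Rmult_le_compat_l; [left; apply Rinv_0_lt_compat; lra|].
    eapply Rle_trans; [apply sum_f_R0_triangle|apply (sum_Rle _ (fun _ => B)); auto].
  - rewrite sum_cte; right; field; lra.
Qed.

Lemma abs_le_of_coef_amp_bound g x A : cont g -> periodic g ->
  (forall n, sum_f_R0 (coef_amp g) n <= A) ->
  Rabs (g x) <= A + Rabs (cos_coef g 0) / (2 * PI).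
Proof.
  intros Hg Hp HA; apply le_epsilon; intros eps Heps.
  destruct (cesaro_sum_cvg g x Hg Hp eps Heps) as [N HN].
  assert (Rabs (cesaro_sum g N x) <= A + Rabs (cos_coef g 0) / (2 * PI)).
  { apply abs_cesaro_sum_le_of; intros n.
    eapply Rle_trans; [apply abs_fourier_sum_le|].
    apply Rplus_le_compat_r, HA. }
  pose proof (Rabs_triang_inv (g x) (cesaro_sum g N x)) as Htri.
  rewrite Rabs_minus_sym in Htri; lra.
Qed.

Definition coef_energy (g : R -> R) (n : nat) : R :=
  sum_f_R0 (fun k => cos_coef g k ^ 2 + sin_coef g k ^ 2) n.

Lemma coef_energy_ge0 g n : 0 <= coef_energy g n.
Proof. apply cond_pos_sum; intros; apply Rplus_le_le_0_compat; apply pow2_ge_0. Qed.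

Lemma coef_energy_le_mono g m n : (m <= n)%nat -> coef_energy g m <= coef_energy g n.
Proof.
  apply sum_f_R0_le_mono; intros; apply Rplus_le_le_0_compat; apply pow2_ge_0.
Qed.

Lemma RInt_mul_fourier_sum g n : cont g ->
  RInt (fun x => g x * fourier_sum g n x) 0 (2 * PI)
  = / PI * coef_energy g n - / (2 * PI) * cos_coef g 0 ^ 2 :> R.
Proof.
  intros Hg.
  rewrite (RInt_ext_R _ (fun x => / PI * sum_f_R0 (fun k =>
              cos_coef g k * (g x * cos (INR k * x)) + sin_coef g k * (g x * sin (INR k * x))) n
            - / (2 * PI) * cos_coef g 0 * g x)).
  - rewrite RInt_minus_cont, !RInt_scal_cont, RInt_sum_cont by solve_cont.
    rewrite <- cos_coef_0; f_equal; [f_equal|ring].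
    apply sum_eq; intros k _.
    rewrite RInt_plus_cont, !RInt_scal_cont by solve_cont; fold (cos_coef g k) (sin_coef g k).
    ring.
  - intros x; unfold fourier_sum.
    rewrite (sum_eq (fun k => cos_coef g k * (g x * cos (INR k * x))
                              + sin_coef g k * (g x * sin (INR k * x)))
                    (fun k => g x * (cos_coef g k * cos (INR k * x)
                                     + sin_coef g k * sin (INR k * x)))), sum_f_R0_scal_l
      by (intros; ring).
    ring.
Qed.

Lemma coef_energy_le_RInt_mul_fourier_sum g n : cont g ->
  coef_energy g n / (2 * PI) <= RInt (fun x => g x * fourier_sum g n x) 0 (2 * PI).
Proof.
  intros Hg; pose proof PI_RGT_0.
  rewrite RInt_mul_fourier_sum by auto.
  assert (cos_coef g 0 ^ 2 <= coef_energy g n).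
  { apply Rle_trans with (coef_energy g 0); [|apply coef_energy_le_mono; lia].
    unfold coef_energy; simpl; pose proof (pow2_ge_0 (sin_coef g 0)); lra. }
  replace (/ PI) with (2 * / (2 * PI)) by (field; lra).
  assert (0 < / (2 * PI)) by (apply Rinv_0_lt_compat; lra).
  unfold Rdiv; nra.
Qed.

Lemma RInt_mul_cesaro_sum g N : cont g ->
  RInt (fun x => g x * cesaro_sum g N x) 0 (2 * PI)
  = / INR (S N) * sum_f_R0 (fun n => RInt (fun x => g x * fourier_sum g n x) 0 (2 * PI)) N :> R.
Proof.
  intros Hg.
  rewrite (RInt_ext_R _ (fun x => / INR (S N) * sum_f_R0 (fun n => g x * fourier_sum g n x) N))
    by (intros x; unfold cesaro_sum; rewrite sum_f_R0_scal_l; ring).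
  rewrite RInt_scal_cont, (RInt_sum_cont (fun n x => g x * fourier_sum g n x)) by solve_cont.
  reflexivity.
Qed.

Lemma RInt_mul_cesaro_sum_le g N B : cont g -> periodic g -> (forall x, Rabs (g x) <= B) ->
  RInt (fun x => g x * cesaro_sum g N x) 0 (2 * PI) <= 2 * PI * B ^ 2.
Proof.
  intros Hg Hp HB; pose proof PI_RGT_0.
  apply Rle_trans with (RInt (fun _ => B ^ 2) 0 (2 * PI));
    [|rewrite RInt_const_R; right; ring].
  apply RInt_le_cont; [lra|unfold cesaro_sum; solve_cont|solve_cont|].
  intros x _; eapply Rle_trans; [apply Rle_abs|]; rewrite Rabs_mult.
  assert (Rabs (cesaro_sum g N x) <= B) by (apply abs_cesaro_sum_le; auto).
  pose proof (HB x); pose proof (Rabs_pos (g x)); pose proof (Rabs_pos (cesaro_sum g N x)).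
  nra.
Qed.

(* The average of [coef_energy g n] over [n <= 2 M] is at least half of
   [coef_energy g M], and it is controlled by [RInt g * cesaro_sum g] because
   Fejér means do not increase the sup norm. *)
Lemma bessel_ineq g B : cont g -> periodic g -> (forall x, Rabs (g x) <= B) ->
  forall M, coef_energy g M <= 8 * PI ^ 2 * B ^ 2.
Proof.
  intros Hg Hp HB M; pose proof PI_RGT_0.
  set (N := (M + M)%nat); pose proof (INR_S_pos M); pose proof (INR_S_pos N).
  assert (Havg : sum_f_R0 (coef_energy g) N / (2 * PI) <= INR (S N) * (2 * PI * B ^ 2)).
  { apply Rle_trans with (sum_f_R0 (fun n => RInt (fun x => g x * fourier_sum g n x) 0 (2 * PI)) N).
    - unfold Rdiv; rewrite Rmult_comm, <- sum_f_R0_scal_l.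
      apply sum_Rle; intros n _; rewrite Rmult_comm; apply coef_energy_le_RInt_mul_fourier_sum, Hg.
    - apply (Rmult_le_reg_l (/ INR (S N))); [apply Rinv_0_lt_compat; lra|].
      rewrite <- RInt_mul_cesaro_sum, <- Rmult_assoc, Rinv_l, Rmult_1_l by (auto; lra).
      apply RInt_mul_cesaro_sum_le; auto. }
  assert (Hmid := sum_f_R0_ge_mul_mid (coef_energy g) M (coef_energy_ge0 g)
                    (fun n => coef_energy_le_mono g n (S n) (Nat.le_succ_diag_r n))).
  fold N in Hmid.
  assert (HSN : INR (S N) <= 2 * INR (S M)) by (unfold N; rewrite !S_INR, plus_INR; lra).
  pose proof (coef_energy_ge0 g M).
  assert (sum_f_R0 (coef_energy g) N <= 4 * PI ^ 2 * B ^ 2 * INR (S N)).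
  { apply (Rmult_le_reg_r (/ (2 * PI))); [apply Rinv_0_lt_compat; lra|].
    replace (4 * PI ^ 2 * B ^ 2 * INR (S N) * / (2 * PI)) with (INR (S N) * (2 * PI * B ^ 2))
      by (field; lra).
    exact Havg. }
  pose proof (pow2_ge_0 B); nra.
Qed.

Definition H1_weight (n : nat) : R := / (1 + INR (S n) ^ 2).

Lemma H1_weight_pos n : 0 < H1_weight n.
Proof. unfold H1_weight; apply Rinv_0_lt_compat; pose proof (pos_INR (S n)); nra. Qed.

Lemma ex_series_H1_weight : ex_series H1_weight.
Proof.
  apply (ex_series_of_bounded _ 2); [intros; left; apply H1_weight_pos|].
  intros N.
  apply Rle_trans with (sum_f_R0 (fun n => 2 * (/ (INR n + 1) - / (INR n + 2))) N).
  - apply sum_Rle; intros n _; unfold H1_weight; rewrite S_INR; pose proof (pos_INR n).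
    replace (2 * (/ (INR n + 1) - / (INR n + 2))) with (/ ((INR n + 1) * (INR n + 2) / 2))
      by (field; lra).
    apply Rinv_le_contravar; nra.
  - rewrite sum_f_R0_scal_l.
    assert (Htel : forall m, sum_f_R0 (fun n => / (INR n + 1) - / (INR n + 2)) m
                             = 1 - / (INR m + 2)).
    { induction m as [|m IH]; [simpl; field|].
      rewrite tech5, IH, S_INR; pose proof (pos_INR m); field; lra. }
    rewrite Htel; pose proof (pos_INR N).
    assert (0 < / (INR N + 2)) by (apply Rinv_0_lt_compat; lra); lra.
Qed.

Definition H1_sup_const : R :=
  3 + (1 + 2 * PI ^ 2 * Series H1_weight) / (2 * PI).

Lemma coef_amp_S_le v n l : cont v -> 0 < l ->
  coef_amp v (S n) <= (l * H1_tail v n + 2 * PI ^ 2 / l * H1_weight n) / (2 * PI).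
Proof.
  intros Hv Hl; pose proof PI_RGT_0; pose proof (pos_INR (S n)).
  rewrite H1_tail_coef by auto; unfold coef_amp, H1_weight.
  set (X := cos_coef v (S n) ^ 2 + sin_coef v (S n) ^ 2).
  assert (HX : 0 <= X) by (unfold X; nra).
  set (b := (1 + INR (S n) ^ 2) / (2 * PI ^ 2)).
  assert (Hb : 0 < b) by (unfold b; apply Rdiv_lt_0_compat; nra).
  assert (Hamgm : 2 * sqrt X <= l * b * X + / (l * b)).
  { pose proof (pow2_ge_0 (sqrt X - / (l * b))).
    pose proof (Rmult_le_pos (l * b) _ (Rlt_le _ _ (Rmult_lt_0_compat _ _ Hl Hb)) H1).
    replace (l * b * (sqrt X - / (l * b)) ^ 2)
      with (l * b * sqrt X ^ 2 - 2 * sqrt X + / (l * b)) in H2 by (field; nra).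
    rewrite pow2_sqrt in H2 by auto; lra. }
  replace (2 * PI ^ 2 / l * / (1 + INR (S n) ^ 2)) with (/ (l * b))
    by (unfold b; field; split; [nra|lra]).
  apply (Rmult_le_reg_r (2 * PI)); [lra|].
  replace (sqrt X / PI * (2 * PI)) with (2 * sqrt X) by (field; lra).
  replace ((l * (b * X) + / (l * b)) / (2 * PI) * (2 * PI)) with (l * b * X + / (l * b))
    by (field; lra).
  exact Hamgm.
Qed.

Lemma Series_H1_tail_ge0 v : cont v -> ex_series (H1_tail v) -> 0 <= Series (H1_tail v).
Proof. intros Hv Hs; apply Series_ge0; auto; intros; apply H1_tail_ge0; auto. Qed.

Lemma abs_mean_le_H1norm v : cont v -> ex_series (H1_tail v) ->
  Rabs (cos_coef v 0) / (2 * PI) <= H1norm v.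
Proof.
  intros Hv Hs; pose proof PI_RGT_0; pose proof (Series_H1_tail_ge0 v Hv Hs).
  replace (Rabs (cos_coef v 0) / (2 * PI)) with (Rabs (cos_coef v 0 / (2 * PI))).
  - rewrite H1norm_coef, <- sqrt_Rsqr_abs by auto; apply sqrt_le_1_alt.
    rewrite Rsqr_pow2; lra.
  - unfold Rdiv; rewrite Rabs_mult, (Rabs_right (/ (2 * PI))); [reflexivity|].
    left; apply Rinv_0_lt_compat; lra.
Qed.

Lemma Series_H1_tail_le v : cont v -> ex_series (H1_tail v) ->
  Series (H1_tail v) <= H1norm v ^ 2.
Proof.
  intros Hv Hs; pose proof (Series_H1_tail_ge0 v Hv Hs).
  rewrite H1norm_coef, pow2_sqrt by (auto; nra); nra.
Qed.

Lemma coef_amp_0 v : coef_amp v 0 = Rabs (cos_coef v 0) / PI.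
Proof.
  unfold coef_amp; rewrite sin_coef_0, <- sqrt_Rsqr_abs; do 2 f_equal; unfold Rsqr; ring.
Qed.

Lemma abs_le_H1_param v x l : inH1 v -> 0 < l ->
  Rabs (v x) <= 3 * H1norm v
                + (l * H1norm v ^ 2 + 2 * PI ^ 2 / l * Series H1_weight) / (2 * PI).
Proof.
  intros [Hp [Hc Hs]] Hl; pose proof PI_RGT_0.
  pose proof (abs_mean_le_H1norm v Hc Hs) as Hmean.
  pose proof (Series_H1_tail_le v Hc Hs) as Htail.
  set (c := 2 * PI ^ 2 / l).
  assert (Hc0 : 0 <= c) by (unfold c; apply Rdiv_le_0_compat; nra).
  assert (Hrest : forall m, sum_f_R0 (fun k => coef_amp v (S k)) m
                  <= (l * H1norm v ^ 2 + c * Series H1_weight) / (2 * PI)).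
  { intros m.
    apply Rle_trans
      with (sum_f_R0 (fun k => / (2 * PI) * (l * H1_tail v k + c * H1_weight k)) m).
    { apply sum_Rle; intros k _; rewrite Rmult_comm; apply coef_amp_S_le; auto. }
    rewrite sum_f_R0_scal_l, Rmult_comm.
    apply Rmult_le_compat_r; [left; apply Rinv_0_lt_compat; lra|].
    rewrite sum_plus, !sum_f_R0_scal_l.
    apply Rplus_le_compat.
    - apply Rmult_le_compat_l; [lra|].
      eapply Rle_trans; [apply sum_f_R0_le_Series|]; auto using H1_tail_ge0.
    - apply Rmult_le_compat_l; [lra|].
      apply sum_f_R0_le_Series; [intros; left; apply H1_weight_pos|apply ex_series_H1_weight]. }
  eapply Rle_trans.
  - apply (abs_le_of_coef_amp_bound v x
             (coef_amp v 0 + (l * H1norm v ^ 2 + c * Series H1_weight) / (2 * PI))); auto.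
    intros [|m].
    + pose proof (Hrest 0%nat); pose proof (coef_amp_ge0 v 1); simpl in *; lra.
    + rewrite (decomp_sum _ (S m)) by lia; simpl pred.
      apply Rplus_le_compat_l, Hrest.
  - rewrite coef_amp_0.
    replace (Rabs (cos_coef v 0) / PI) with (2 * (Rabs (cos_coef v 0) / (2 * PI)))
      by (field; lra).
    lra.
Qed.

Lemma H1_sup_bound v x : inH1 v -> Rabs (v x) <= H1_sup_const * H1norm v.
Proof.
  intros Hv; pose proof PI_RGT_0.
  assert (HZ : 0 <= Series H1_weight)
    by (apply Series_ge0; [intros; left; apply H1_weight_pos|apply ex_series_H1_weight]).
  assert (Hn : 0 <= H1norm v) by apply sqrt_pos.
  destruct (Req_dec (H1norm v) 0) as [H0|H0].
  - rewrite H0, Rmult_0_r; apply le_epsilon; intros eps Heps.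
    set (l := PI * Series H1_weight / eps + 1).
    assert (Hl : 0 < l)
      by (unfold l; pose proof (Rdiv_le_0_compat (PI * Series H1_weight) eps); nra).
    eapply Rle_trans; [apply (abs_le_H1_param v x l Hv Hl)|].
    rewrite H0.
    replace (3 * 0 + (l * 0 ^ 2 + 2 * PI ^ 2 / l * Series H1_weight) / (2 * PI))
      with (PI * Series H1_weight / l) by (field; lra).
    apply (Rmult_le_reg_r l); [lra|].
    replace (PI * Series H1_weight / l * l) with (PI * Series H1_weight) by (field; lra).
    replace ((0 + eps) * l) with (PI * Series H1_weight + eps) by (unfold l; field; lra).
    lra.
  - eapply Rle_trans; [apply (abs_le_H1_param v x (/ H1norm v) Hv); apply Rinv_0_lt_compat; lra|].
    right; unfold H1_sup_const; field; lra.
Qed.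

Lemma H1_tail_plus_le f g n : cont f -> cont g ->
  H1_tail (fun x => f x + g x) n <= 2 * (H1_tail f n + H1_tail g n).
Proof.
  intros Hf Hg; pose proof PI_RGT_0; pose proof (pos_INR (S n)).
  rewrite !H1_tail_coef, cos_coef_plus, sin_coef_plus by solve_cont.
  set (w := (1 + INR (S n) ^ 2) / (2 * PI ^ 2)).
  assert (0 <= w) by (unfold w; apply Rdiv_le_0_compat; nra).
  pose proof (pow2_ge_0 (cos_coef f (S n) - cos_coef g (S n))).
  pose proof (pow2_ge_0 (sin_coef f (S n) - sin_coef g (S n))).
  apply Rle_trans with (w * (2 * (cos_coef f (S n) ^ 2 + sin_coef f (S n) ^ 2
                              + (cos_coef g (S n) ^ 2 + sin_coef g (S n) ^ 2)))).
  - apply Rmult_le_compat_l; nra.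
  - right; ring.
Qed.

Lemma H1_tail_scal c f n : cont f -> H1_tail (fun x => c * f x) n = c ^ 2 * H1_tail f n.
Proof.
  intros Hf; rewrite !H1_tail_coef, cos_coef_scal, sin_coef_scal by solve_cont; ring.
Qed.

Lemma inH1_plus f g : inH1 f -> inH1 g -> inH1 (fun x => f x + g x).
Proof.
  intros [Pf [Cf Sf]] [Pg [Cg Sg]]; split; [|split].
  - intros x; rewrite Pf, Pg; reflexivity.
  - apply (cont_plus f g Cf Cg).
  - apply (ex_series_abs_le _ (fun n => 2 * (H1_tail f n + H1_tail g n))).
    + intros n; rewrite Rabs_right by (apply Rle_ge, H1_tail_ge0; solve_cont).
      apply H1_tail_plus_le; auto.
    + exact (ex_series_scal_l 2 _ (ex_series_plus _ _ Sf Sg)).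
Qed.

Lemma inH1_scal c f : inH1 f -> inH1 (fun x => c * f x).
Proof.
  intros [Pf [Cf Sf]]; split; [|split].
  - intros x; rewrite Pf; reflexivity.
  - apply (cont_mult (fun _ => c) f); [apply cont_const|exact Cf].
  - apply (ex_series_ext (fun n => c ^ 2 * H1_tail f n)).
    + intros n; rewrite H1_tail_scal; auto.
    + exact (ex_series_scal_l (c ^ 2) _ Sf).
Qed.

(** * Skew-adjointness of dagger *)

Lemma RInt_mul_dagger_term g n : cont g ->
  RInt (fun x => g x * dagger_term g n x) 0 (2 * PI) = 0 :> R.
Proof.
  intros Hg; pose proof PI_RGT_0; pose proof (INR_S_pos n).
  rewrite (RInt_ext_R _ (fun x => / (PI * INR (S n)) *
     (cos_coef g (S n) * (g x * sin (INR (S n) * x))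
      - sin_coef g (S n) * (g x * cos (INR (S n) * x))))).
  - rewrite RInt_scal_cont, RInt_minus_cont, !RInt_scal_cont by solve_cont.
    fold (cos_coef g (S n)) (sin_coef g (S n)); ring.
  - intros x; unfold dagger_term; field; nra.
Qed.

Definition dagger_majorant (g : R -> R) (n : nat) : R :=
  (cos_coef g (S n) ^ 2 + sin_coef g (S n) ^ 2 + 4 * H1_weight n) / (2 * PI).

Lemma abs_dagger_term_le g n x : Rabs (dagger_term g n x) <= dagger_majorant g n.
Proof.
  unfold dagger_majorant.
  pose proof PI_RGT_0; pose proof (INR_S_pos n) as Hk.
  set (k := INR (S n)) in *; set (a := cos_coef g (S n)); set (b := sin_coef g (S n)).
  assert (Hw : / k ^ 2 <= 2 * H1_weight n).
  { unfold H1_weight; fold k.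
    replace (2 * / (1 + k ^ 2)) with (/ ((1 + k ^ 2) / 2)) by (field; nra).
    apply Rinv_le_contravar; [nra|].
    unfold k; rewrite S_INR; pose proof (pos_INR n); nra. }
  assert (Hamgm : forall c, 2 * (Rabs c / k) <= c ^ 2 + / k ^ 2).
  { intros c; pose proof (pow2_ge_0 (Rabs c - / k)).
    replace ((Rabs c - / k) ^ 2) with (Rabs c ^ 2 - 2 * (Rabs c / k) + / k ^ 2) in H0
      by (field; lra).
    rewrite <- Rsqr_pow2, <- Rsqr_abs, Rsqr_pow2 in H0; lra. }
  assert (Hnum : Rabs (a * sin (k * x) - b * cos (k * x)) <= Rabs a + Rabs b).
  { eapply Rle_trans; [apply Rabs_triang|]; rewrite Rabs_Ropp, !Rabs_mult.
    pose proof (Rabs_pos a); pose proof (Rabs_pos b).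
    assert (Rabs (sin (k * x)) <= 1) by (apply Rabs_le; apply SIN_bound).
    assert (Rabs (cos (k * x)) <= 1) by (apply Rabs_le; apply COS_bound).
    nra. }
  unfold dagger_term; fold k a b.
  unfold Rdiv; rewrite Rabs_mult, Rabs_inv, Rabs_mult, (Rabs_right PI), (Rabs_right k) by lra.
  pose proof (Hamgm a); pose proof (Hamgm b).
  assert (0 < / PI) by (apply Rinv_0_lt_compat; lra).
  assert (0 < / k) by (apply Rinv_0_lt_compat; lra).
  apply Rle_trans with ((Rabs a + Rabs b) * / k * / PI).
  - rewrite Rinv_mult.
    replace ((Rabs a + Rabs b) * / k * / PI) with ((Rabs a + Rabs b) * (/ PI * / k)) by ring.
    apply Rmult_le_compat_r; [nra|exact Hnum].
  - replace ((a ^ 2 + b ^ 2 + 4 * H1_weight n) * / (2 * PI))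
      with ((a ^ 2 + b ^ 2 + 4 * H1_weight n) / 2 * / PI) by (field; lra).
    apply Rmult_le_compat_r; [lra|].
    unfold Rdiv in *; lra.
Qed.

Lemma ex_series_dagger_majorant g B : cont g -> periodic g -> (forall x, Rabs (g x) <= B) ->
  ex_series (dagger_majorant g).
Proof.
  intros Hg Hp HB.
  set (e := fun k => cos_coef g k ^ 2 + sin_coef g k ^ 2).
  assert (He : ex_series e)
    by (apply (ex_series_of_bounded _ (8 * PI ^ 2 * B ^ 2));
        [intros; apply Rplus_le_le_0_compat; apply pow2_ge_0|exact (bessel_ineq g B Hg Hp HB)]).
  apply (ex_series_ext (fun n => / (2 * PI) * (e (S n) + 4 * H1_weight n)));
    [intros; unfold dagger_majorant, Rdiv; apply Rmult_comm|].
  exact (ex_series_scal_l (/ (2 * PI)) _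
           (ex_series_plus _ _ (proj1 (ex_series_incr_1 e) He)
              (ex_series_scal_l 4 _ ex_series_H1_weight))).
Qed.

Definition dagger_partial (g : R -> R) (N : nat) (x : R) : R :=
  sum_f_R0 (fun n => dagger_term g n x) N.

Lemma cont_dagger_partial g N : cont (dagger_partial g N).
Proof. unfold dagger_partial, dagger_term; solve_cont. Qed.

#[export] Hint Resolve cont_dagger_partial : cont.

Lemma RInt_mul_dagger_partial g N : cont g ->
  RInt (fun x => g x * dagger_partial g N x) 0 (2 * PI) = 0 :> R.
Proof.
  intros Hg; unfold dagger_partial.
  rewrite (RInt_ext_R _ (fun x => sum_f_R0 (fun n => g x * dagger_term g n x) N))
    by (intros; rewrite sum_f_R0_scal_l; reflexivity).
  rewrite RInt_sum_cont by (intros; unfold dagger_term; solve_cont).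
  apply sum_eq_R0; intros; apply RInt_mul_dagger_term; auto.
Qed.

Lemma abs_RInt_mul_dagger_le g B N : cont g -> (forall x, Rabs (g x) <= B) ->
  cont (dagger g) -> ex_series (dagger_majorant g) ->
  Rabs (RInt (fun x => g x * dagger g x) 0 (2 * PI))
  <= 2 * PI * B * (Series (dagger_majorant g) - sum_f_R0 (dagger_majorant g) N).
Proof.
  intros Hg HB Hd Hm; pose proof PI_RGT_0.
  replace (RInt (fun x => g x * dagger g x) 0 (2 * PI))
    with (RInt (fun x => g x * (dagger g x - dagger_partial g N x)) 0 (2 * PI)).
  2: { rewrite (RInt_ext_R _ (fun x => g x * dagger g x - g x * dagger_partial g N x))
         by (intros; ring).
       rewrite RInt_minus_cont, RInt_mul_dagger_partial by solve_cont; lra. }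
  eapply Rle_trans.
  - apply (abs_RInt_le_cont _
             (fun _ => B * (Series (dagger_majorant g) - sum_f_R0 (dagger_majorant g) N)));
      [lra|solve_cont|solve_cont|].
    intros x _; rewrite Rabs_mult.
    apply Rmult_le_compat; try apply Rabs_pos; [apply HB|].
    unfold dagger_partial; rewrite dagger_coef by auto.
    apply abs_Series_minus_sum_le; auto; intros; apply abs_dagger_term_le.
  - rewrite RInt_const_R; right; ring.
Qed.

Lemma RInt_mul_dagger_self g B : cont g -> periodic g -> (forall x, Rabs (g x) <= B) ->
  cont (dagger g) -> RInt (fun x => g x * dagger g x) 0 (2 * PI) = 0 :> R.
Proof.
  intros Hg Hp HB Hd; pose proof PI_RGT_0.
  assert (HB0 : 0 <= B) by (eapply Rle_trans; [apply Rabs_pos|apply (HB 0)]).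
  pose proof (ex_series_dagger_majorant g B Hg Hp HB) as Hm.
  apply (eq_0_of_abs_le_Series_tail _ (2 * PI * B) (dagger_majorant g) Hm);
    [apply Rmult_le_pos; lra|].
  intros N; apply abs_RInt_mul_dagger_le; auto.
Qed.

(** * Derivatives along the half-line [0, +oo) *)

Section RealFilterlim.

Context {T : Type} {F : (T -> Prop) -> Prop} {FF : Filter F}.

Lemma filterlim_Rplus (f g : T -> R) a b :
  filterlim f F (locally a) -> filterlim g F (locally b) ->
  filterlim (fun x => f x + g x) F (locally (a + b)).
Proof. intros Hf Hg; exact (filterlim_comp_2 f g Rplus Hf Hg (filterlim_plus a b)). Qed.

Lemma filterlim_Rmult (f g : T -> R) a b :
  filterlim f F (locally a) -> filterlim g F (locally b) ->
  filterlim (fun x => f x * g x) F (locally (a * b)).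
Proof. intros Hf Hg; exact (filterlim_comp_2 f g Rmult Hf Hg (filterlim_mult a b)). Qed.

Lemma filterlim_of_abs_le (f g : T -> R) l :
  F (fun x => Rabs (f x - l) <= g x) -> filterlim g F (locally 0) ->
  filterlim f F (locally l).
Proof.
  intros Hle Hg; apply filterlim_locally; intros eps.
  assert (Hsmall := proj1 (filterlim_locally g 0) Hg eps).
  generalize (filter_and _ _ Hle Hsmall); apply filter_imp; intros x [H1 H2].
  change (Rabs (f x - l) < eps).
  change (Rabs (g x - 0) < eps) in H2; rewrite Rminus_0_r in H2.
  unfold Rabs in H2 at 1; destruct (Rcase_abs (g x)); lra.
Qed.

End RealFilterlim.

Definition halfline_nbhs (t : R) : (R -> Prop) -> Prop :=
  within (fun h => h <> 0 /\ 0 <= t + h) (locally 0).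

Definition is_derive_halfline (f : R -> R) (t l : R) : Prop :=
  filterlim (fun h => (f (t + h) - f t) / h) (halfline_nbhs t) (locally l).

Global Instance halfline_nbhs_filter t : Filter (halfline_nbhs t).
Proof. apply within_filter, locally_filter. Qed.

Lemma filterlim_halfline_id t : filterlim (fun h => h) (halfline_nbhs t) (locally 0).
Proof. apply (filterlim_filter_le_1 _ (filter_le_within _)), filterlim_id. Qed.

Lemma is_derive_halfline_cont f t l : is_derive_halfline f t l ->
  filterlim (fun h => f (t + h)) (halfline_nbhs t) (locally (f t)).
Proof.
  intros Hf.
  apply (filterlim_within_ext _ (fun h => f t + h * ((f (t + h) - f t) / h))).
  - intros h [Hh _]; field; auto.
  - assert (H : filterlim (fun h => f t + h * ((f (t + h) - f t) / h)) (halfline_nbhs t)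
                  (locally (f t + 0 * l))).
    { apply filterlim_Rplus; [apply filterlim_const|].
      apply filterlim_Rmult; [apply filterlim_halfline_id|exact Hf]. }
    rewrite Rmult_0_l, Rplus_0_r in H; exact H.
Qed.

Lemma is_derive_halfline_plus f g t lf lg :
  is_derive_halfline f t lf -> is_derive_halfline g t lg ->
  is_derive_halfline (fun s => f s + g s) t (lf + lg).
Proof.
  intros Hf Hg; unfold is_derive_halfline.
  apply (filterlim_within_ext _ (fun h => (f (t + h) - f t) / h + (g (t + h) - g t) / h)).
  - intros h [Hh _]; field; auto.
  - apply filterlim_Rplus; auto.
Qed.

Lemma is_derive_halfline_mult f g t lf lg :
  is_derive_halfline f t lf -> is_derive_halfline g t lg ->
  is_derive_halfline (fun s => f s * g s) t (lf * g t + f t * lg).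
Proof.
  intros Hf Hg; unfold is_derive_halfline.
  apply (filterlim_within_ext _
           (fun h => (f (t + h) - f t) / h * g (t + h) + f t * ((g (t + h) - g t) / h))).
  - intros h [Hh _]; field; auto.
  - apply filterlim_Rplus; apply filterlim_Rmult.
    + exact Hf.
    + exact (is_derive_halfline_cont g t lg Hg).
    + apply filterlim_const.
    + exact Hg.
Qed.

Lemma is_derive_halfline_sub_const f c t l :
  is_derive_halfline f t l -> is_derive_halfline (fun s => f s - c) t l.
Proof.
  apply filterlim_ext; intros h; f_equal; ring.
Qed.

Lemma is_derive_of_halfline f t l : 0 < t -> is_derive_halfline f t l -> is_derive f t l.
Proof.
  intros Ht Hf; apply is_derive_Reals; intros eps Heps.
  destruct (proj1 (filterlim_locally _ l) Hf (mkposreal eps Heps)) as [d Hd].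
  assert (Hdt : 0 < Rmin d t) by (apply Rmin_pos; [apply cond_pos|auto]).
  exists (mkposreal _ Hdt); intros h Hh0 Hh; simpl in Hh.
  apply (Hd h).
  - change (Rabs (h - 0) < d); rewrite Rminus_0_r.
    eapply Rlt_le_trans; [exact Hh|apply Rmin_l].
  - split; auto.
    assert (Rabs h < t) by (eapply Rlt_le_trans; [exact Hh|apply Rmin_r]).
    unfold Rabs in *; destruct (Rcase_abs h); lra.
Qed.

Lemma halfline_const_of_derive_0 V :
  (forall t, 0 <= t -> is_derive_halfline V t 0) -> forall t, 0 <= t -> V t = V 0.
Proof.
  intros HV t Ht.
  destruct (Req_dec t 0) as [->|Ht0]; [reflexivity|].
  assert (Hstep : forall s, 0 < s < t -> V s = V t).
  { intros s Hs.
    destruct (MVT_gen V s t (fun _ => 0)) as [c [_ Hc]].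
    - intros x Hx; apply is_derive_of_halfline; [|apply HV];
        unfold Rmin in Hx; destruct (Rle_dec s t); lra.
    - intros x Hx; apply continuity_pt_filterlim, (ex_derive_continuous (V := R_NormedModule)).
      exists 0.
      apply is_derive_of_halfline; [|apply HV]; unfold Rmin in Hx; destruct (Rle_dec s t); lra.
    - lra. }
  assert (Hright : filter_le (at_right 0) (halfline_nbhs 0)).
  { intros P; unfold halfline_nbhs, at_right, within.
    apply filter_imp; intros h HP Hh; apply HP; split; lra. }
  assert (Hlim0 := filterlim_filter_le_1 _ Hright
                     (is_derive_halfline_cont V 0 0 (HV 0 (Rle_refl 0)))).
  assert (Htpos : 0 < t) by lra.
  assert (Hlimt : filterlim (fun h => V (0 + h)) (at_right 0) (locally (V t))).
  { apply (filterlim_ext_loc (fun _ => V t)); [|apply filterlim_const].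
    exists (mkposreal t Htpos); intros h Hh Hpos; simpl in *.
    change (Rabs (h - 0) < t) in Hh; rewrite Rminus_0_r, Rabs_right in Hh by lra.
    rewrite Rplus_0_l; symmetry; apply Hstep; lra. }
  symmetry; exact (filterlim_locally_unique _ _ _ Hlim0 Hlimt).
Qed.

(** * Differentiating integrals along the solution *)

Lemma abs_sub_le_of_derive_bound (f f' : R -> R) a b :
  (forall x, is_derive f x (f' x)) -> (forall x, Rabs (f' x) <= 1) ->
  Rabs (f b - f a) <= Rabs (b - a).
Proof.
  intros Hd HL.
  destruct (MVT_gen f a b f') as [c [_ E]].
  - intros; apply Hd.
  - intros x _; apply continuity_pt_filterlim, (ex_derive_continuous (V := R_NormedModule)).
    exists (f' x); apply Hd.
  - rewrite E, Rabs_mult; pose proof (Rabs_pos (b - a)); pose proof (HL c); nra.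
Qed.

Lemma taylor_remainder_le (F G H : R -> R) :
  (forall x, is_derive F x (G x)) -> (forall x, is_derive G x (H x)) ->
  (forall x, Rabs (H x) <= 1) -> forall y d, Rabs (F (y + d) - F y - G y * d) <= d ^ 2.
Proof.
  intros HF HG HH y d.
  set (phi := fun s => F (y + s) - F y - G y * s).
  assert (Hphi : forall s, is_derive phi s (G (y + s) - G y)).
  { intros s; unfold phi; auto_derive.
    - exists (G (y + s)); apply HF.
    - replace (Derive (fun x : R => F x) (y + s)) with (G (y + s))
        by (symmetry; apply is_derive_unique, HF).
      ring. }
  destruct (MVT_gen phi 0 d (fun s => G (y + s) - G y)) as [c [Hc E]].
  - intros; apply Hphi.
  - intros x _; apply continuity_pt_filterlim, (ex_derive_continuous (V := R_NormedModule)).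
    eexists; apply Hphi.
  - assert (Hphi0 : phi 0 = 0) by (unfold phi; rewrite Rplus_0_r; ring).
    change (Rabs (phi d) <= d ^ 2).
    rewrite <- (Rminus_0_r (phi d)), <- Hphi0, E, Rminus_0_r, Rabs_mult.
    assert (Hcd : Rabs c <= Rabs d).
    { revert Hc; unfold Rmin, Rmax; destruct (Rle_dec 0 d);
        unfold Rabs; destruct (Rcase_abs c), (Rcase_abs d); lra. }
    assert (Hlip := abs_sub_le_of_derive_bound G H y (y + c) HG HH).
    replace (y + c - y) with c in Hlip by ring.
    rewrite <- (Rsqr_pow2 d), Rsqr_abs; unfold Rsqr.
    apply Rmult_le_compat_r; [apply Rabs_pos|lra].
Qed.

Lemma taylor_sin y d : Rabs (sin (y + d) - sin y - cos y * d) <= d ^ 2.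
Proof.
  apply (taylor_remainder_le sin cos (fun x => - sin x));
    [apply is_derive_sin|apply is_derive_cos|].
  intros x; rewrite Rabs_Ropp; apply Rabs_le, SIN_bound.
Qed.

Lemma taylor_cos y d : Rabs (cos (y + d) - cos y - (- sin y) * d) <= d ^ 2.
Proof.
  apply (taylor_remainder_le cos (fun x => - sin x) (fun x => - cos x)); [apply is_derive_cos| |].
  - intros x; apply (is_derive_opp sin), is_derive_sin.
  - intros x; rewrite Rabs_Ropp; apply Rabs_le, COS_bound.
Qed.

Section DeriveRIntComp.

Variables F G : R -> R.
Hypothesis F_taylor : forall y d, Rabs (F (y + d) - F y - G y * d) <= d ^ 2.
Hypothesis G_bound : forall y, Rabs (G y) <= 1.
Hypothesis F_cont : cont F.
Hypothesis G_cont : cont G.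

Lemma abs_difference_quotient_le y z z' h : h <> 0 ->
  Rabs ((F (y + h * z) - F y) / h - G y * z') <= Rabs h * z ^ 2 + Rabs (z - z').
Proof.
  intros Hh; pose proof (Rabs_pos_lt h Hh).
  replace ((F (y + h * z) - F y) / h - G y * z')
    with ((F (y + h * z) - F y - G y * (h * z)) / h + G y * (z - z')) by (field; auto).
  eapply Rle_trans; [apply Rabs_triang|]; apply Rplus_le_compat.
  - unfold Rdiv; rewrite Rabs_mult, Rabs_inv.
    apply (Rmult_le_reg_r (Rabs h)); [lra|].
    rewrite Rmult_assoc, Rinv_l by lra.
    replace (Rabs h * z ^ 2 * Rabs h) with ((h * z) ^ 2)
      by (rewrite <- !Rsqr_pow2, Rsqr_mult, Rsqr_abs; unfold Rsqr; ring).
    rewrite Rmult_1_r; apply F_taylor.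
  - rewrite Rabs_mult; pose proof (G_bound y); pose proof (Rabs_pos (z - z')); nra.
Qed.

Lemma abs_quotient_RInt_comp_le (v0 v1 v' : R -> R) h : h <> 0 ->
  inH1 v0 -> inH1 v1 -> inH1 v' ->
  Rabs ((RInt (fun x => F (v1 x)) 0 (2 * PI) - RInt (fun x => F (v0 x)) 0 (2 * PI)) / h
        - RInt (fun x => G (v0 x) * v' x) 0 (2 * PI))
  <= 2 * PI * (Rabs h * (H1_sup_const * H1norm (fun x => (v1 x - v0 x) / h - v' x)
                         + H1_sup_const * H1norm v') ^ 2
               + H1_sup_const * H1norm (fun x => (v1 x - v0 x) / h - v' x)).
Proof.
  intros Hh H0 H1 H'; pose proof PI_RGT_0.
  set (w := fun x => (v1 x - v0 x) / h - v' x).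
  assert (Hw : inH1 w).
  { replace w with (fun x => / h * (v1 x + -1 * v0 x) + -1 * v' x)
      by (apply functional_extensionality; intros x; unfold w; field; auto).
    apply inH1_plus; apply inH1_scal; [apply inH1_plus; [|apply inH1_scal]|]; auto. }
  destruct H0 as [_ [C0 _]]; destruct H1 as [_ [C1 _]]; pose proof H' as [_ [C' _]].
  set (A := H1_sup_const * H1norm w); set (M := H1_sup_const * H1norm v').
  replace ((RInt (fun x => F (v1 x)) 0 (2 * PI) - RInt (fun x => F (v0 x)) 0 (2 * PI)) / h
           - RInt (fun x => G (v0 x) * v' x) 0 (2 * PI))
    with (RInt (fun x => (F (v1 x) - F (v0 x)) / h - G (v0 x) * v' x) 0 (2 * PI)).
  2: { rewrite RInt_minus_cont by solve_cont; unfold Rdiv.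
       rewrite (RInt_ext_R (fun x => (F (v1 x) - F (v0 x)) * / h)
                           (fun x => / h * (F (v1 x) - F (v0 x)))) by (intros; ring).
       rewrite RInt_scal_cont, RInt_minus_cont by solve_cont; lra. }
  apply Rle_trans with (RInt (fun _ => Rabs h * (A + M) ^ 2 + A) 0 (2 * PI));
    [|rewrite RInt_const_R; right; ring].
  apply abs_RInt_le_cont; [lra|solve_cont|solve_cont|]; intros x _.
  assert (Hwx : Rabs (w x) <= A) by (apply H1_sup_bound; auto).
  assert (Hv'x : Rabs (v' x) <= M) by (apply H1_sup_bound; auto).
  set (z := (v1 x - v0 x) / h).
  replace (v1 x) with (v0 x + h * z) by (unfold z; field; auto).
  eapply Rle_trans; [apply abs_difference_quotient_le; auto|].
  replace (z - v' x) with (w x) by reflexivity.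
  apply Rplus_le_compat; [|exact Hwx].
  apply Rmult_le_compat_l; [apply Rabs_pos|].
  rewrite <- !Rsqr_pow2, (Rsqr_abs z); apply Rsqr_incr_1.
  - replace z with (w x + v' x) by (unfold w, z; ring).
    eapply Rle_trans; [apply Rabs_triang|lra].
  - apply Rabs_pos.
  - eapply Rle_trans; [|apply Rplus_le_compat; [apply Hwx|apply Hv'x]].
    apply Rplus_le_le_0_compat; apply Rabs_pos.
Qed.

Lemma is_derive_halfline_RInt_comp (u u' : R -> R -> R) t : 0 <= t ->
  (forall s, 0 <= s -> inH1 (u s)) -> inH1 (u' t) ->
  filterlim (fun h => H1norm (fun x => (u (t + h) x - u t x) / h - u' t x))
    (halfline_nbhs t) (locally 0) ->
  is_derive_halfline (fun s => RInt (fun x => F (u s x)) 0 (2 * PI)) t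
    (RInt (fun x => G (u t x) * u' t x) 0 (2 * PI)).
Proof.
  intros Ht Hu Hu' Hlim.
  set (K := H1_sup_const); set (M := K * H1norm (u' t)).
  set (n := fun h => H1norm (fun x => (u (t + h) x - u t x) / h - u' t x)).
  apply (filterlim_of_abs_le _ (fun h => 2 * PI * (Rabs h * (K * n h + M) ^ 2 + K * n h))).
  - unfold halfline_nbhs, within; apply filter_forall; intros h [Hh Hth].
    apply abs_quotient_RInt_comp_le; auto; apply Hu; lra.
  - fold n in Hlim; clearbody n K M.
    assert (Habs : filterlim (fun h => Rabs h) (halfline_nbhs t) (locally 0)).
    { rewrite <- Rabs_R0.
      apply (filterlim_comp _ _ _ (fun h => h) Rabs _ (locally 0));
        [apply filterlim_halfline_id|apply continuous_Rabs]. }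
    assert (Hbound : filterlim (fun h => 2 * PI * (Rabs h * ((K * n h + M) * (K * n h + M))
                                                  + K * n h))
                       (halfline_nbhs t)
                       (locally (2 * PI * (0 * ((K * 0 + M) * (K * 0 + M)) + K * 0)))).
    { repeat first [ apply filterlim_Rplus | apply filterlim_Rmult | apply filterlim_const
                   | exact Habs | exact Hlim ]. }
    replace (2 * PI * (0 * ((K * 0 + M) * (K * 0 + M)) + K * 0)) with 0 in Hbound by ring.
    revert Hbound; apply filterlim_ext; intros h; ring.
Qed.

End DeriveRIntComp.

Definition flow_field (H0 : R) (v : R -> R) (x : R) : R :=
  dagger (fun y => sin (v y)) x - / H0 * calCt v.

Lemma cont_dagger_of_flow_field H0 v : cont (flow_field H0 v) ->
  cont (dagger (fun y => sin (v y))).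
Proof.
  intros Hf; apply (cont_ext (fun x => flow_field H0 v x + / H0 * calCt v)); [|solve_cont].
  intros x; unfold flow_field; ring.
Qed.

Lemma RInt_cos_mul_flow_field H0 v : cont v -> cont (flow_field H0 v) ->
  RInt (fun x => cos (v x) * flow_field H0 v x) 0 (2 * PI)
  = calCt v - / H0 * calCt v * calH v :> R.
Proof.
  intros Hv Hf; pose proof (cont_dagger_of_flow_field H0 v Hf) as Hd.
  unfold flow_field, calCt, calH.
  rewrite (RInt_ext_R _ (fun x => cos (v x) * dagger (fun y => sin (v y)) x
                                  - / H0 * calCt v * cos (v x))) by (intros; unfold calCt; ring).
  rewrite RInt_minus_cont, RInt_scal_cont by solve_cont; reflexivity.
Qed.

Lemma RInt_sin_mul_flow_field H0 v : cont v -> periodic v -> cont (flow_field H0 v) ->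
  RInt (fun x => - sin (v x) * flow_field H0 v x) 0 (2 * PI)
  = / H0 * calCt v * calF v :> R.
Proof.
  intros Hv Hp Hf; pose proof (cont_dagger_of_flow_field H0 v Hf) as Hd.
  unfold flow_field, calF.
  rewrite (RInt_ext_R _ (fun x => / H0 * calCt v * sin (v x)
                                  - sin (v x) * dagger (fun y => sin (v y)) x)) by (intros; ring).
  rewrite RInt_minus_cont, RInt_scal_cont by solve_cont.
  rewrite (RInt_mul_dagger_self (fun y => sin (v y)) 1); [ring|solve_cont| | |auto].
  - intros x; unfold periodic in Hp; rewrite Hp; reflexivity.
  - intros x; apply Rabs_le, SIN_bound.
Qed.

Section Flow.

Variables (H0 : R) (u u' : R -> R -> R).
Hypothesis H0_neq0 : H0 <> 0.
Hypothesis u_C1_H1 : C1_H1 u u'.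
Hypothesis u_flow : forall t, 0 <= t -> forall x, u' t x = flow_field H0 (u t) x.

Let u_H1 t (Ht : 0 <= t) : inH1 (u t) := proj1 (proj1 u_C1_H1 t Ht).
Let u'_H1 t (Ht : 0 <= t) : inH1 (u' t) := proj2 (proj1 u_C1_H1 t Ht).
Let u_deriv t (Ht : 0 <= t) := proj1 (proj2 u_C1_H1) t Ht.

Lemma flow_field_cont t : 0 <= t -> cont (flow_field H0 (u t)).
Proof.
  intros Ht; destruct (u'_H1 t Ht) as [_ [Hc _]].
  apply (cont_ext (u' t)); auto.
Qed.

Lemma is_derive_halfline_calF t : 0 <= t ->
  is_derive_halfline (fun s => calF (u s)) t
    (calCt (u t) - / H0 * calCt (u t) * calH (u t)).
Proof.
  intros Ht; destruct (u_H1 t Ht) as [_ [Hc _]].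
  rewrite <- RInt_cos_mul_flow_field by (auto using flow_field_cont).
  rewrite (RInt_ext_R _ (fun x => cos (u t x) * u' t x)) by (intros; rewrite u_flow; auto).
  exact (is_derive_halfline_RInt_comp sin cos taylor_sin (fun y => Rabs_le _ _ (COS_bound y))
           cont_sin cont_cos u u' t Ht u_H1 (u'_H1 t Ht) (u_deriv t Ht)).
Qed.

Lemma is_derive_halfline_calH t : 0 <= t ->
  is_derive_halfline (fun s => calH (u s)) t (/ H0 * calCt (u t) * calF (u t)).
Proof.
  intros Ht; destruct (u_H1 t Ht) as [Hp [Hc _]].
  rewrite <- RInt_sin_mul_flow_field by (auto using flow_field_cont).
  rewrite (RInt_ext_R _ (fun x => - sin (u t x) * u' t x)) by (intros; rewrite u_flow; auto).
  apply (is_derive_halfline_RInt_comp cos (fun y => - sin y) taylor_cos);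
    [|exact cont_cos|solve_cont|exact Ht|exact u_H1|exact (u'_H1 t Ht)|exact (u_deriv t Ht)].
  intros y; rewrite Rabs_Ropp; apply Rabs_le, SIN_bound.
Qed.

(* [F' = C - C H / H0] and [H' = C F / H0] make [2 F F' + 2 (H - H0) H'] vanish. *)
Lemma is_derive_halfline_invariant t : 0 <= t ->
  is_derive_halfline (fun s => (calF (u s))² + (calH (u s) - H0)²) t 0.
Proof.
  intros Ht.
  assert (Hb := is_derive_halfline_sub_const _ H0 t _ (is_derive_halfline_calH t Ht)).
  assert (Ha := is_derive_halfline_calF t Ht).
  replace 0 with ((calCt (u t) - / H0 * calCt (u t) * calH (u t)) * calF (u t)
                  + calF (u t) * (calCt (u t) - / H0 * calCt (u t) * calH (u t))
                  + ((/ H0 * calCt (u t) * calF (u t)) * (calH (u t) - H0)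
                     + (calH (u t) - H0) * (/ H0 * calCt (u t) * calF (u t))))
    by (field; auto).
  exact (is_derive_halfline_plus _ _ t _ _ (is_derive_halfline_mult _ _ t _ _ Ha Ha)
           (is_derive_halfline_mult _ _ t _ _ Hb Hb)).
Qed.

End Flow.

Theorem mainTheorem5 (H0 : R) (u0 : R -> R) (u u' : R -> R -> R) :
  H0 <> 0 ->
  inH1 u0 -> calF u0 = 0 -> calH u0 = H0 ->
  C1_H1 u u' ->
  (forall x, u 0 x = u0 x) ->
  (forall t, 0 <= t -> forall x,
      u' t x = dagger (fun y => sin (u t y)) x - / H0 * calCt (u t)) ->
  forall t, 0 <= t -> calF (u t) = 0 /\ calH (u t) = H0.
Proof.
  intros HH0 _ HF0 HH0' Hreg Hinit Heq t Ht.
  assert (Hu0 : u 0 = u0) by (apply functional_extensionality, Hinit).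
  pose proof (halfline_const_of_derive_0 _ (is_derive_halfline_invariant H0 u u' HH0 Hreg Heq) t Ht)
    as HV; cbv beta in HV.
  rewrite Hu0, HF0, HH0', Rminus_eq_0, Rsqr_0, Rplus_0_r in HV.
  destruct (Rplus_sqr_eq_0 _ _ HV) as [HF HH]; split; lra.
Qed.
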